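(* Let $k$ be a commutative ring, $P$ an invertible $k$-module, $Q=P^*$, and $A$ a $P$-Frobenius $k$-algebra with Frobenius system $(\psi,x_i,q_i,y_i)$. Then $A$ is a separable $k$-algebra if and only if there is $d=\sum_jp_j\otimes a_j\in P\otimes_kA$ such that \[ \sum_{i,j}x_i\,q_i(p_j)\,a_j\,y_i=1_A. \]
   Context: $A$ is $P$-Frobenius if it is finitely generated projective over $k$ and $A_A\cong\mathrm{Hom}_k(A,P)_A$, where $(\psi a)(x)=\psi(ax)$. A Frobenius system consists of $\psi\in\mathrm{Hom}_k(A,P)$ such that $a\mapsto\psi a$ is an isomorphism $A\to\mathrm{Hom}_k(A,P)$, and finitely many $x_i,y_i\in A$, $q_i\in Q$ with $\sum_ix_i\,q_i(\psi(y_ia))=a$ and $\sum_iq_i(\psi(ax_i))\,y_i=a$ for all $a\in A$. *)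

From HB Require Import structures.
From mathcomp Require Import all_boot all_order all_algebra.

Set Implicit Arguments.
Unset Strict Implicit.
Unset Printing Implicit Defensive.

Import GRing.Theory.
Local Open Scope ring_scope.

Definition bilinear_map (k : comPzRingType) (U V W : lmodType k)
  (f : U -> V -> W) : Prop :=
  (forall u, linear (f u)) /\ (forall v, linear (fun u => f u v)).

Definition dualmod (k : comPzRingType) (P : lmodType k) := {linear P -> k^o}.

(* (Q, b) is such that k, via b : P x Q -> k, is a tensor product P (x)_k Q,
   i.e. the linear map P (x) Q -> k induced by b is an isomorphism. *)
Definition is_tensor_to_k (k : comPzRingType) (P Q : lmodType k)
  (b : P -> Q -> k^o) : Prop :=
  bilinear_map b /\
  forall (M : lmodType k) (g : P -> Q -> M), bilinear_map g ->
    exists h : {linear k^o -> M},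
      (forall p q, g p q = h (b p q)) /\
      (forall h' : {linear k^o -> M}, (forall p q, g p q = h' (b p q)) -> h' =1 h).

Definition invertible_mod (k : comPzRingType) (P : lmodType k) : Prop :=
  exists (Q : lmodType k) (b : P -> Q -> k^o), is_tensor_to_k b.

Definition fg_projective (k : comPzRingType) (M : lmodType k) : Prop :=
  exists (n : nat) (s : {linear M -> 'rV[k]_n}) (r : {linear 'rV[k]_n -> M}),
    forall m, r (s m) = m.

(* A is P-Frobenius: A is f.g. projective over k and A_A ~= Hom_k(A,P)_A,
   where (psi a)(x) = psi (a x). *)
Definition P_Frobenius (k : comPzRingType) (P : lmodType k) (A : algType k) : Prop :=
  fg_projective A /\
  exists f : A -> {linear A -> P},
    [/\ (forall a b x, f (a + b) x = f a x + f b x),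
        (forall a b x, f (a * b) x = f a (b * x)) &
        bijective f].

Definition Frobenius_system (k : comPzRingType) (P : lmodType k) (A : algType k)
  (psi : {linear A -> P}) (n : nat) (x y : 'I_n -> A)
  (q : 'I_n -> dualmod P) : Prop :=
  [/\ (* a |-> psi a is an isomorphism A -> Hom_k(A,P) *)
      (forall a b, (forall z, psi (a * z) = psi (b * z)) -> a = b),
      (forall phi : {linear A -> P}, exists a, forall z, phi z = psi (a * z)),
      (forall a, \sum_(i < n) (q i (psi (y i * a)) : k) *: x i = a) &
      (forall a, \sum_(i < n) (q i (psi (a * x i)) : k) *: y i = a)].

(* Equality of two elements sum_j u_j (x) v_j and sum_j u'_j (x) v'_j of
   A (x)_k A, expressed through the universal property of the tensor product. *)
Definition tensor_eq (k : comPzRingType) (A : algType k)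
  (n : nat) (u v : 'I_n -> A) (n' : nat) (u' v' : 'I_n' -> A) : Prop :=
  forall (M : lmodType k) (f : A -> A -> M), bilinear_map f ->
    \sum_(j < n) f (u j) (v j) = \sum_(j < n') f (u' j) (v' j).

(* A is a separable k-algebra: it has a separability idempotent
   e = sum_j u_j (x) v_j in A (x)_k A^op with mu(e) = 1 and a e = e a. *)
Definition separable_alg (k : comPzRingType) (A : algType k) : Prop :=
  exists (n : nat) (u v : 'I_n -> A),
    \sum_(j < n) u j * v j = 1 /\
    forall a, tensor_eq (fun j => a * u j) v u (fun j => v j * a).

From HB Require Import structures.
From mathcomp Require Import all_boot all_order all_algebra.
From mathcomp Require Import generic_quotient ring_quotient boolp zify.

Set Implicit Arguments.
Unset Strict Implicit.
Unset Printing Implicit Defensive.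

Import GRing.Theory.
Local Open Scope ring_scope.
Local Open Scope quotient_scope.

(* If e = sum_j u_j (x) v_j is a separability idempotent, then d = sum_j psi(u_j) (x) v_j
   works: centrality of e moves y_i to the left factor, and the dual-basis
   expansion a = sum_i q_i(psi(y_i a)) x_i collapses the sum to sum_j u_j v_j = 1.
   Conversely, d = sum_j p_j (x) a_j yields e = sum_i (sum_j q_i(p_j) x_i a_j) (x) y_i;
   expanding c x_i and y_i c in the dual bases, c e = e c reduces to the symmetry
   q(p) q'(p') = q(p') q'(p) of any two functionals on P.  This symmetry comes from
   the switch identity b(z,w) u = b(u,w) z of a tensor product P (x) Q ~= k:
   writing 1 = sum_s b(z_s, w_s), the universal property gives
   b(z,w) u = b(u,w) rho(z) with rho(z) = t z, and t = 1 because 1 - t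
   annihilates the square of every b(z_s, w_s). *)

Section LinearFun.
Variables (k : pzRingType) (U V : lmodType k) (f : U -> V).
Hypothesis f_lin : linear f.

Lemma linD : {morph f : u v / u + v}.
Proof. exact: (GRing.semilinear_linear f_lin).2. Qed.

Lemma linZ a : {morph f : u / a *: u}.
Proof. exact: (GRing.semilinear_linear f_lin).1. Qed.

Lemma lin0 : f 0 = 0.
Proof. by rewrite -(scale0r 0) linZ scale0r. Qed.

Lemma lin_sum (I : Type) (r : seq I) (F : I -> U) :
  f (\sum_(i <- r) F i) = \sum_(i <- r) f (F i).
Proof. exact: (big_morph f linD lin0). Qed.

End LinearFun.

Lemma linear_scalar (k : comPzRingType) (M : lmodType k)
    (h : {linear k^o -> M}) (c : k) :
  h c = c *: h 1.
Proof. by rewrite -linearZ /= [c *: _]mulr1. Qed.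

Lemma mulr_expD_eq0 (R : comPzRingType) (s a b : R) m :
  s * a ^+ 2 = 0 -> s * b ^+ m = 0 -> s * (a + b) ^+ m.+1 = 0.
Proof.
move=> sa2 sbm; rewrite exprDn mulr_sumr big1 // => i _; rewrite mulrnAr.
have [le_mi | lt_im] := leqP m i.
  by rewrite -(subnKC le_mi) exprD mulrCA (mulrA s) sbm mul0r mul0rn.
have -> : (m.+1 - i = (m.+1 - i - 2) + 2)%N by rewrite subnK //; lia.
by rewrite exprD -mulrA mulrCA (mulrA s) sa2 mul0r mul0rn.
Qed.

Lemma sqr_annihilator_sum1_eq0 (R : comPzRingType) (s : R) (r : seq R) :
  (forall a, a \in r -> s * a ^+ 2 = 0) -> \sum_(a <- r) a = 1 -> s = 0.
Proof.
move=> sr2 r1; rewrite -[s]mulr1 -(expr1n _ (size r).+1) -r1.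
elim: r sr2 {r1} => [|a r IHr] sr2; first by rewrite big_nil expr1 mulr0.
rewrite big_cons /=; apply: mulr_expD_eq0; first by apply: sr2; rewrite inE eqxx.
by apply: IHr => c rc; apply: sr2; rewrite inE rc orbT.
Qed.

Section QuotientModule.
Variables (k : pzRingType) (V : lmodType k) (S : {pred V}).
Hypothesis S_submod : GRing.submod_closed S.

Definition submod_pred : {pred V} := S.
HB.instance Definition _ := GRing.isSubmodClosed.Build k V submod_pred S_submod.

Definition quotmod := Quotient.quot submod_pred.
HB.instance Definition _ := GRing.Zmodule.on quotmod.
HB.instance Definition _ := Quotient.on quotmod.

Definition quotmod_scale (c : k) (x : quotmod) : quotmod :=
  \pi_quotmod (c *: repr x).

Lemma quotmod_scale_pi c v : quotmod_scale c (\pi_quotmod v) = \pi_quotmod (c *: v).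
Proof.
apply/eqP; rewrite -Quotient.idealrBE -scalerBr rpredZ // Quotient.idealrBE.
by rewrite reprK.
Qed.

Lemma quotmod_scaleA a b x :
  quotmod_scale a (quotmod_scale b x) = quotmod_scale (a * b) x.
Proof. by elim/quotW: x => v; rewrite (quotmod_scale_pi b) !quotmod_scale_pi scalerA. Qed.

Lemma quotmod_scale1 : left_id 1 quotmod_scale.
Proof. by elim/quotW => v; rewrite quotmod_scale_pi scale1r. Qed.

Lemma quotmod_scaleDr : right_distributive quotmod_scale +%R.
Proof.
move=> a; elim/quotW => u; elim/quotW => v.
by rewrite -raddfD !quotmod_scale_pi scalerDr raddfD.
Qed.

Lemma quotmod_scaleDl x : {morph quotmod_scale^~ x : a b / a + b}.
Proof. by elim/quotW: x => v a b; rewrite !quotmod_scale_pi scalerDl raddfD. Qed.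

HB.instance Definition _ := GRing.Zmodule_isLmodule.Build k quotmod
  quotmod_scaleA quotmod_scale1 quotmod_scaleDr quotmod_scaleDl.

Definition quotmod_proj (v : V) : quotmod := \pi_quotmod v.

Lemma quotmod_proj_is_linear : linear quotmod_proj.
Proof.
move=> a u v; rewrite /quotmod_proj raddfD; congr (_ + _).
exact: esym (quotmod_scale_pi a u).
Qed.

HB.instance Definition _ := GRing.isLinear.Build k V quotmod *:%R quotmod_proj
  quotmod_proj_is_linear.

Lemma quotmod_proj_eq0 v : (quotmod_proj v == 0) = (v \in S).
Proof.
have := Quotient.idealrBE submod_pred v 0; rewrite subr0 => ->.
by rewrite -(linear0 quotmod_proj).
Qed.

End QuotientModule.

Section TensorToK.
Variables (k : comPzRingType) (P Q : lmodType k) (b : P -> Q -> k^o).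
Hypothesis b_tensor : is_tensor_to_k b.

Lemma tensor_linr u : linear (b u).
Proof. exact: b_tensor.1.1. Qed.

Lemma tensor_linl w : linear (b^~ w).
Proof. exact: b_tensor.1.2. Qed.

Definition tensor_span : {pred k^o} :=
  fun c => `[< exists s : seq (P * Q), c = \sum_(x <- s) b x.1 x.2 >].

Lemma tensor_span_submod : GRing.submod_closed tensor_span.
Proof.
split; first by apply/asboolP; exists [::]; rewrite big_nil.
move=> a c d /asboolP[s ->] /asboolP[t ->]; apply/asboolP.
exists ([seq (a *: x.1, x.2) | x <- s] ++ t).
rewrite big_cat big_map scaler_sumr; congr (_ + _); apply: eq_bigr => x _ /=.
by rewrite (linZ (tensor_linl _)).
Qed.

Lemma tensor_to_k_sum1 : exists s : seq (P * Q), \sum_(x <- s) b x.1 x.2 = 1.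
Proof.
(* The zero map into k / span(b) factors through b both via 0 and via the
   projection, so uniqueness forces the projection of 1 to vanish. *)
pose M := quotmod tensor_span_submod.
have zero_bil : bilinear_map (fun (_ : P) (_ : Q) => 0 : M).
  by split=> ? ? ? ?; rewrite scaler0 addr0.
have [h [_ h_uniq]] := b_tensor.2 M _ zero_bil.
have proj_b p w : 0 = quotmod_proj tensor_span_submod (b p w).
  apply/esym/eqP; rewrite quotmod_proj_eq0; apply/asboolP.
  by exists [:: (p, w)]; rewrite big_seq1.
have : quotmod_proj tensor_span_submod 1 == 0.
  by rewrite (h_uniq _ proj_b) -(h_uniq \0).
by rewrite quotmod_proj_eq0 => /asboolP[s ->]; exists s.
Qed.

Section UnitDecomposition.
Variable s0 : seq (P * Q).
Hypothesis s0_sum1 : \sum_(x <- s0) b x.1 x.2 = 1.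

Lemma bilinear_factor (M : lmodType k) (g : P -> Q -> M) : bilinear_map g ->
  forall u w, g u w = b u w *: \sum_(x <- s0) g x.1 x.2.
Proof.
move=> g_bil u w; have [h [gh _]] := b_tensor.2 M g g_bil.
rewrite gh linear_scalar; congr (_ *: _).
by under eq_bigr do rewrite gh; rewrite -linear_sum /= s0_sum1.
Qed.

Definition rho (z : P) : P := \sum_(x <- s0) b z x.2 *: x.1.

Lemma rho_lin : linear rho.
Proof.
move=> a z z'; rewrite /rho scaler_sumr -big_split /=; apply: eq_bigr => x _.
by rewrite (linD (tensor_linl _)) (linZ (tensor_linl _)) scalerDl scalerA.
Qed.

Lemma b_scale_rho z w u : b z w *: u = b u w *: rho z.
Proof.
apply: (bilinear_factor (g := fun u w => b z w *: u)).
split=> [u' a w1 w2 | w' a u1 u2]; last by rewrite scalerDr !scalerA mulrC.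
by rewrite (linD (tensor_linr _)) (linZ (tensor_linr _)) scalerDl scalerA.
Qed.

Lemma b_nondeg v : (forall w, b v w = 0) -> v = 0.
Proof.
move=> bv0; rewrite -[v]scale1r -s0_sum1 scaler_suml big1 // => x _.
by rewrite b_scale_rho bv0 scale0r.
Qed.

Definition rho_trace : k := \sum_(x <- s0) b (rho x.1) x.2.

Lemma b_rho u w : b (rho u) w = b u w * rho_trace.
Proof.
apply: (bilinear_factor (g := fun u w => b (rho u) w : k^o)).
split=> [u' | w' a u1 u2]; first exact: tensor_linr.
by rewrite /= rho_lin (linD (tensor_linl _)) (linZ (tensor_linl _)).
Qed.

Lemma rho_trace_eq1 : rho_trace = 1.
Proof.
apply/eqP; rewrite eq_sym -subr_eq0; apply/eqP.
apply: (@sqr_annihilator_sum1_eq0 _ _ [seq b x.1 x.2 | x <- s0]); last by rewrite big_map.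
move=> _ /mapP[x _ ->].
have := congr1 (b^~ x.2) (b_scale_rho x.1 x.2 x.1).
rewrite /= !(linZ (tensor_linl _)) b_rho; set a := b x.1 x.2 => E.
have a2 : a * a = a * (a * rho_trace) := E.
by rewrite expr2 mulrBl mul1r {1}a2 mulrA mulrC subrr.
Qed.

Lemma rho_id z : rho z = z.
Proof.
apply/eqP; rewrite -subr_eq0; apply/eqP; apply: b_nondeg => w.
rewrite -scaleN1r (linD (tensor_linl _)) (linZ (tensor_linl _)) b_rho rho_trace_eq1.
by rewrite mulr1 scaleN1r subrr.
Qed.

Lemma b_swap z w u : b z w *: u = b u w *: z.
Proof. by rewrite b_scale_rho rho_id. Qed.

Lemma dual_rank1 (q q' : dualmod P) p p' : q p * q' p' = q p' * q' p.
Proof.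
pose F u u' := \sum_(x <- s0) q x.1 * q' (b u x.2 *: u').
suff qqF u u' : q u * q' u' = F u u'.
  by rewrite !qqF; apply: eq_bigr => x _; rewrite b_swap.
rewrite -[u in q u]rho_id /rho linear_sum mulr_suml; apply: eq_bigr => x _.
have qZ (r : dualmod P) c v : r (c *: v) = c * r v by rewrite linearZ.
by rewrite !qZ mulrCA mulrA.
Qed.

End UnitDecomposition.
End TensorToK.

Lemma invertible_dual_rank1 (k : comPzRingType) (P : lmodType k) :
  invertible_mod P -> forall (q q' : dualmod P) p p', q p * q' p' = q p' * q' p.
Proof.
move=> [Q [b b_tensor]]; have [s0 s0_sum1] := tensor_to_k_sum1 b_tensor.
exact: dual_rank1 s0_sum1.
Qed.

Lemma bilinear_mul_scale (k : comPzRingType) (A : algType k)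
    (phi : {linear A -> k^o}) (c : A) :
  bilinear_map (fun u v : A => c * (phi u *: v)).
Proof.
split=> [u a v w | v a u w].
  by rewrite scalerDr mulrDr !scalerAr scalerA mulrC -scalerA.
by rewrite linearP scalerDl mulrDr -scalerA scalerAr.
Qed.

Section FrobeniusSystem.
Variables (k : comPzRingType) (P : lmodType k) (A : algType k).
Variables (psi : {linear A -> P}) (n : nat) (x y : 'I_n -> A) (q : 'I_n -> dualmod P).
Hypothesis expand_l : forall a, \sum_(i < n) (q i (psi (y i * a)) : k) *: x i = a.
Hypothesis expand_r : forall a, \sum_(i < n) (q i (psi (a * x i)) : k) *: y i = a.

Lemma separable_idempotent_casimir (m : nat) (u v : 'I_m -> A) :
  \sum_(j < m) u j * v j = 1 ->
  (forall a, tensor_eq (fun j => a * u j) v u (fun j => v j * a)) ->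
  \sum_(i < n) \sum_(j < m) x i * ((q i (psi (u j)) : k) *: v j) * y i = 1.
Proof.
move=> uv1 uv_central.
have move_y i : \sum_(j < m) x i * ((q i (psi (u j)) : k) *: v j) * y i
    = \sum_(j < m) x i * ((q i (psi (y i * u j)) : k) *: v j).
  under eq_bigr do rewrite -mulrA -scalerAl.
  exact: esym (uv_central (y i) _ _ (bilinear_mul_scale (q i \o psi) (x i))).
under eq_bigr do rewrite move_y.
rewrite exchange_big /= -uv1; apply: eq_bigr => j _.
rewrite -{2}(expand_l (u j)) mulr_suml; apply: eq_bigr => i _.
by rewrite -scalerAr scalerAl.
Qed.

Hypothesis q_rank1 : forall i l p p', q i p * q l p' = q i p' * q l p.

Lemma casimir_central (M : lmodType k) (f : A -> A -> M) (p : P) (a c : A) :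
  bilinear_map f ->
  \sum_(i < n) f (c * (x i * ((q i p : k) *: a))) (y i)
  = \sum_(i < n) f (x i * ((q i p : k) *: a)) (y i * c).
Proof.
move=> [f_linr f_linl].
have expand_c i : f (c * (x i * ((q i p : k) *: a))) (y i)
    = \sum_(l < n) (q l (psi (y l * (c * x i))) * q i p) *: f (x l * a) (y i).
  rewrite mulrA -{1}(expand_l (c * x i)) mulr_suml (lin_sum (f_linl _)).
  apply: eq_bigr => l _.
  by rewrite -scalerAl -scalerAr scalerA (linZ (f_linl _)).
have expand_yc i : f (x i * ((q i p : k) *: a)) (y i * c)
    = \sum_(l < n) (q i p * q l (psi (y i * c * x l))) *: f (x i * a) (y l).
  rewrite -scalerAr (linZ (f_linl _)) -{1}(expand_r (y i * c)).
  rewrite (lin_sum (f_linr _)) scaler_sumr; apply: eq_bigr => l _.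
  by rewrite (linZ (f_linr _)) scalerA.
rewrite (eq_bigr _ (fun i _ => expand_c i)) (eq_bigr _ (fun i _ => expand_yc i)).
rewrite [RHS]exchange_big /=; apply: eq_bigr => i _; apply: eq_bigr => l _.
by rewrite mulrA q_rank1.
Qed.

Lemma casimir_separable (m : nat) (p : 'I_m -> P) (a : 'I_m -> A) :
  \sum_(i < n) \sum_(j < m) x i * ((q i (p j) : k) *: a j) * y i = 1 ->
  separable_alg A.
Proof.
move=> d1; pose U i := \sum_(j < m) x i * ((q i (p j) : k) *: a j).
exists n, U, y; split.
  by rewrite -d1; apply: eq_bigr => i _; rewrite mulr_suml.
move=> c M f f_bil; have [_ f_linl] := f_bil.
rewrite /U; under eq_bigr do rewrite mulr_sumr (lin_sum (f_linl _)).
under [RHS]eq_bigr do rewrite (lin_sum (f_linl _)).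
rewrite [LHS]exchange_big [RHS]exchange_big /=; apply: eq_bigr => j _.
exact: casimir_central.
Qed.

End FrobeniusSystem.

Theorem proposition6p1 (k : comPzRingType) (P : lmodType k) (A : algType k)
  (hP : invertible_mod P) (hA : P_Frobenius P A)
  (psi : {linear A -> P}) (n : nat) (x y : 'I_n -> A)
  (q : 'I_n -> dualmod P)
  (hsys : Frobenius_system psi x y q) :
  separable_alg A <->
  exists (m : nat) (p : 'I_m -> P) (a : 'I_m -> A),
    \sum_(i < n) \sum_(j < m) x i * ((q i (p j) : k) *: a j) * y i = 1.
Proof.
(* Only the two dual-basis expansions of the Frobenius system are needed. *)
case: hsys => _ _ expand_l expand_r; split.
  move=> [m [u [v [uv1 uv_central]]]]; exists m, (psi \o u), v.
  exact: separable_idempotent_casimir.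
move=> [m [p [a d1]]]; apply: (casimir_separable expand_l expand_r _ d1).
by move=> i l; apply: invertible_dual_rank1.
Qed.
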